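(* Let $r\ge1$ be an integer and for $i=0,1,\dots,2r$ let $$G_{i,r}=\big((2r+1)K_1\big)\nabla\Big(\big((2r+1-i)K_1\big)\cup\big(K_1\nabla(i+1)K_1\big)\Big),$$ each of order $4r+4$. Then for every $i$, $LE(G_{i,r})=LE(K_{4r+4})=8r+6$ (so each $G_{i,r}$ is $L$-borderenergetic), and the $2r+1$ graphs $G_{0,r},\dots,G_{2r,r}$ have pairwise distinct Laplacian spectra, none equal to the Laplacian spectrum of $K_{4r+4}$.
   Context: All graphs are finite, simple and undirected. The Laplacian matrix of $G$ is $L(G)=D-A$ ($D$ degree matrix, $A$ adjacency matrix). For a graph $G$ on $n$ vertices with Laplacian eigenvalues $\mu_1,\dots,\mu_n$ and average degree $\overline d = 2|E(G)|/n$, the Laplacian energy is $LE(G)=\sum_{i=1}^n|\mu_i-\overline d|$. One has $LE(K_n)=2n-2$. A graph $G$ on $n$ vertices is $L$-borderenergetic if $LE(G)=LE(K_n)$. $K_m$ is the complete graph on $m$ vertices, $mG$ is the disjoint union of $m$ copies of $G$ ($0K_1$ is the empty graph), $\cup$ is disjoint union, and the join $G_1\nabla G_2$ is obtained from $G_1\cup G_2$ by adding all edges between a vertex of $G_1$ and a vertex of $G_2$. *)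

From HB Require Import structures.
From mathcomp Require Import all_boot all_order all_algebra all_field.
Set Implicit Arguments. Unset Strict Implicit. Unset Printing Implicit Defensive.
Import Order.TTheory GRing.Theory Num.Theory.
Local Open Scope ring_scope.

(* A finite graph: a finite vertex type with an adjacency relation.
   All graphs built below are simple (adjacency symmetric and irreflexive). *)
Record graph := Graph { vtype : finType; adj : rel vtype }.

Definition gorder (G : graph) : nat := #|vtype G|.

Definition Kn (n : nat) : graph := @Graph 'I_n (fun x y => x != y).
Definition mK1 (m : nat) : graph := @Graph 'I_m (fun _ _ => false).
Definition K1 : graph := mK1 1.

Definition gunion (G1 G2 : graph) : graph :=
  @Graph (vtype G1 + vtype G2)%type
    (fun x y => match x, y with
                | inl a, inl b => adj a b
                | inr a, inr b => adj a b
                | _, _ => false end).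

Definition gjoin (G1 G2 : graph) : graph :=
  @Graph (vtype G1 + vtype G2)%type
    (fun x y => match x, y with
                | inl a, inl b => adj a b
                | inr a, inr b => adj a b
                | _, _ => true end).

Definition deg (G : graph) (x : vtype G) : nat := #|[pred y | adj x y]|.

Definition laplacian (G : graph) : 'M[algC]_(gorder G) :=
  \matrix_(i, j)
    ((if i == j then (deg (enum_val i))%:R else 0)
     - (adj (enum_val i) (enum_val j))%:R).

(* Laplacian eigenvalues with multiplicity: the roots (with multiplicity)
   of the characteristic polynomial of L(G) over algC.  This sequence is
   determined up to permutation. *)
Definition lap_spectrum (G : graph) : seq algC :=
  proj1_sig (closed_field_poly_normal (char_poly (laplacian G))).

(* average degree 2|E|/n = (sum of degrees)/n *)
Definition avg_deg (G : graph) : algC :=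
  (\sum_(x : vtype G) deg x)%:R / (gorder G)%:R.

Definition LE (G : graph) : algC :=
  \sum_(mu <- lap_spectrum G) `|mu - avg_deg G|.

Definition L_borderenergetic (G : graph) : Prop := LE G = LE (Kn (gorder G)).

Definition G_ir (i r : nat) : graph :=
  gjoin (mK1 (2 * r + 1))
        (gunion (mK1 (2 * r + 1 - i)) (gjoin K1 (mK1 (i + 1)))).

From HB Require Import structures.
From mathcomp Require Import all_boot all_order all_algebra all_field.
From mathcomp Require Import ring lra zify.
Import Order.TTheory GRing.Theory Num.Theory.
Set Implicit Arguments. Unset Strict Implicit. Unset Printing Implicit Defensive.
Local Open Scope ring_scope.

(** The vertices of [G_ir i r] fall into four classes (the
    (2r+1)K1 side, the 2r+1-i isolated vertices, the centre of the star and
    its i+1 leaves) such that the Laplacian is [diag(deg) - U C U^T], with [U]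
    the class-incidence matrix and [C] the 0/1 adjacency of the quotient.
    Sylvester's identity [det(1 + AB) = det(1 + BA)] turns the characteristic
    polynomial into the product of the [x - deg v] times a 4x4 determinant;
    together with the evaluation at all large integers this gives the spectrum
    0, 4r+4, 2r+3+i, (2r+3)^(2r), (2r+1)^(2r+1-i), (2r+2)^i.  The average
    degree is 2r+2+t with t = i/(2r+2) in [0, 1], the signs of the deviations
    are fixed, and the t-terms cancel in the Laplacian energy.  Finally the
    multiplicity 2r+1-i of the eigenvalue 2r+1 separates the spectra. *)

Lemma det1Dmulmx_comm (R : comUnitRingType) m n
    (A : 'M[R]_(m, n)) (B : 'M[R]_(n, m)) :
  \det (1%:M + A *m B) = \det (1%:M + B *m A).
Proof.
(* Factor the block matrix [1 -A; B 1] in two ways. *)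
have E1 : block_mx 1%:M (- A) B 1%:M =
          block_mx 1%:M 0 B 1%:M *m block_mx 1%:M (- A) 0 (1%:M + B *m A).
  by rewrite mulmx_block ?mul1mx ?mul0mx ?mulmx1 ?mulmx0 ?addr0 ?add0r mulmxN addrC addrK.
have E2 : block_mx 1%:M (- A) B 1%:M =
          block_mx (1%:M + A *m B) (- A) 0 1%:M *m block_mx 1%:M 0 B 1%:M.
  by rewrite mulmx_block ?mul1mx ?mul0mx ?mulmx1 ?mulmx0 ?addr0 ?add0r mulNmx addrK.
have := congr1 determinant E2; rewrite E1 !det_mulmx !det_lblock !det_ublock.
by rewrite !det1 !mul1r !mulr1.
Qed.

Lemma horner_char_poly (R : comNzRingType) n (A : 'M[R]_n) x :
  (char_poly A).[x] = \det (x%:M - A).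
Proof.
rewrite /char_poly -[_.[x]]/(horner_eval x _) -det_map_mx; congr (\det _).
apply/matrixP => i j; rewrite !mxE.
change (('X *+ (i == j) - (A i j)%:P).[x] = x *+ (i == j) - A i j).
by rewrite hornerD hornerN hornerC hornerMn hornerX.
Qed.

Lemma det_diag_mxD_lowrank (F : fieldType) n k (g : 'rV[F]_n) (U : 'M[F]_(n, k))
    (C : 'M[F]_k) :
  (forall j, g 0 j != 0) ->
  \det (diag_mx g + U *m C *m U^T) =
  (\prod_j g 0 j) * \det (1%:M + C *m (U^T *m diag_mx (\row_j (g 0 j)^-1) *m U)).
Proof.
move=> g_neq0; set gV := \row_j (g 0 j)^-1.
have ggV : diag_mx g *m diag_mx gV = 1%:M.
  apply/matrixP => i j; rewrite mul_diag_mx !mxE.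
  by case: eqP => [->|_]; rewrite ?mulr0 // mulr1n mulfV.
have -> : diag_mx g + U *m C *m U^T =
          diag_mx g *m (1%:M + (diag_mx gV *m U) *m (C *m U^T)).
  by rewrite mulmxDr mulmx1 !mulmxA ggV mul1mx.
by rewrite det_mulmx det_diag det1Dmulmx_comm !mulmxA.
Qed.

Definition class_resolvent (F : fieldType) (V : finType) k (cls : V -> 'I_k)
    (h : V -> F) (x : F) : 'M[F]_k :=
  diag_mx (\row_a \sum_(v | cls v == a) (x - h v)^-1).

Lemma horner_char_poly_class (F : fieldType) n k (cls : 'I_n -> 'I_k)
    (h : 'I_n -> F) (A : 'M[F]_n) (c : 'M[F]_k) :
  (forall i j, A i j = (if i == j then h i else 0) - c (cls i) (cls j)) ->
  forall x, (forall i, x != h i) ->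
  (char_poly A).[x] = (\prod_i (x - h i)) * \det (1%:M + c *m class_resolvent cls h x).
Proof.
move=> A_class x x_neq_h; rewrite horner_char_poly.
pose g : 'rV[F]_n := \row_i (x - h i).
pose U : 'M[F]_(n, k) := \matrix_(i, a) (cls i == a)%:R.
have UcUT i j : (U *m c *m U^T) i j = c (cls i) (cls j).
  rewrite !mxE (bigD1 (cls j)) //= big1 ?addr0 => [|b /negPf b_neq]; last first.
    by rewrite !mxE eq_sym b_neq mulr0.
  rewrite !mxE eqxx mulr1 (bigD1 (cls i)) //= big1 ?addr0 => [|b /negPf b_neq].
    by rewrite !mxE eqxx mul1r.
  by rewrite !mxE eq_sym b_neq mul0r.
have -> : x%:M - A = diag_mx g + U *m c *m U^T.
  apply/matrixP => i j; rewrite [in RHS]mxE UcUT !mxE A_class.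
  by case: eqP => _; rewrite ?mulr1n ?mulr0n; ring.
rewrite det_diag_mxD_lowrank => [|j]; last by rewrite mxE subr_eq0.
rewrite (eq_bigr (fun i => x - h i)) => [|i _]; last by rewrite mxE.
congr (_ * \det (1%:M + c *m _)); apply/matrixP => a b.
rewrite !mxE; under eq_bigr => i _ do rewrite mul_mx_diag !mxE.
case: (eqVneq a b) => [<-|a_neq_b].
  rewrite mulr1n [RHS]big_mkcond; apply: eq_bigr => i _.
  by case: (cls i == a); rewrite ?mulr1 ?mul1r ?mul0r ?mulr0.
rewrite [RHS]mulr0n big1 // => i _.
case: (eqVneq (cls i) a) => [cls_a|]; last by rewrite !mul0r.
by rewrite cls_a (negPf a_neq_b) mulr0.
Qed.

Lemma horner_char_poly_laplacian (G : graph) k (cls : vtype G -> 'I_k)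
    (h : vtype G -> algC) (c : 'M[algC]_k) :
  (forall u v, (if u == v then (deg u)%:R else 0) - (adj u v)%:R =
               (if u == v then h u else 0) - c (cls u) (cls v)) ->
  forall x, (forall v, x != h v) ->
  (char_poly (laplacian G)).[x] =
    (\prod_v (x - h v)) * \det (1%:M + c *m class_resolvent cls h x).
Proof.
move=> L_class x x_neq_h.
rewrite (@horner_char_poly_class _ _ _ (cls \o enum_val) (h \o enum_val) _ c)
  => [|i j|i]; last 2 first.
- by rewrite /laplacian mxE -(inj_eq enum_val_inj) L_class.
- exact: x_neq_h.
rewrite (big_enum_val (fun v => x - h v)); congr (_ * \det (1%:M + c *m diag_mx _)).
by apply/rowP => a; rewrite !mxE [RHS]big_mkcond [RHS]big_enum_val -big_mkcond.
Qed.

Lemma poly_eq_large_nat (R : numDomainType) (p q : {poly R}) M :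
  (forall k, (M <= k)%N -> p.[k%:R] = q.[k%:R]) -> p = q.
Proof.
move=> pq_large; apply/eqP; rewrite -subr_eq0; apply/eqP.
pose s : seq R := [seq (M + k)%:R | k <- iota 0 (size (p - q))].
apply: (@roots_geq_poly_eq0 _ _ s).
- apply/allP => _ /mapP [k _ ->].
  by rewrite /root hornerD hornerN pq_large ?subrr ?leq_addr.
- rewrite map_inj_uniq ?iota_uniq // => a b /eqP; rewrite eqr_nat => /eqP.
  exact: addnI.
- by rewrite size_map size_iota.
Qed.

Lemma perm_closed_field_roots (C : closedFieldType) (p : {poly C}) s :
  p \is monic -> p = \prod_(z <- s) ('X - z%:P) ->
  perm_eq (sval (closed_field_poly_normal p)) s.
Proof.
move=> /monicP lc1 ps; case: closed_field_poly_normal => rs /= prs.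
by apply: prod_XsubC_eq; rewrite -ps {1}prs lc1 scale1r.
Qed.

Lemma perm_lap_spectrum (G : graph) (s : seq algC) M :
  (forall k, (M <= k)%N ->
     (char_poly (laplacian G)).[k%:R] = \prod_(z <- s) (k%:R - z)) ->
  perm_eq (lap_spectrum G) s.
Proof.
move=> char_large; apply: perm_closed_field_roots; first exact: char_poly_monic.
apply: (poly_eq_large_nat (M := M)) => k /char_large ->.
by rewrite horner_prod; apply: eq_bigr => z _; rewrite hornerXsubC.
Qed.

Lemma perm_LE (G : graph) (s : seq algC) :
  perm_eq (lap_spectrum G) s -> LE G = \sum_(mu <- s) `|mu - avg_deg G|.
Proof. by move=> Gs; rewrite /LE (perm_big _ Gs). Qed.

Lemma deg_Kn n (u : 'I_n) : @deg (Kn n) u = n.-1.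
Proof.
rewrite /deg -[in RHS](card_ord n) -(cardC1 u); apply: eq_card => y.
by rewrite !inE eq_sym.
Qed.

Lemma lap_spectrum_Kn n :
  perm_eq (lap_spectrum (Kn n.+1)) [seq m%:R | m <- 0%N :: nseq n n.+1].
Proof.
apply: (perm_lap_spectrum (M := n.+2)) => k lt_n1_k.
have k_neq : k%:R != n.+1%:R :> algC by rewrite eqr_nat gtn_eqF.
rewrite (@horner_char_poly_laplacian (Kn n.+1) 1 (fun=> ord0) (fun=> n.+1%:R) 1%:M).
- rewrite mul1mx det_mx11 !mxE /= mulr1n (eq_bigl xpredT) // sumr_const.
  rewrite prodr_const !card_ord big_cons big_map big_nseq iter_mulr mulr1 subr0 exprS.
  have k_sub_neq0 : k%:R - n.+1%:R != 0 :> algC by rewrite subr_eq0.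
  by rewrite mulr1n mulrAC mulrDr mulr1 mulrnAr mulfV // subrK.
- move=> u v; rewrite deg_Kn !mxE /=.
  by case: eqP => _ /=; rewrite ?subr0 ?sub0r // -natr1 addrK.
- move=> _; exact: k_neq.
Qed.

Lemma avg_deg_Kn n : avg_deg (Kn n.+1) = n%:R.
Proof.
rewrite /avg_deg /gorder (eq_bigr (fun=> n)) => [|u _]; last exact: deg_Kn.
by rewrite sum_nat_const !card_ord natrM mulrC mulKf // pnatr_eq0.
Qed.

Lemma LE_Kn n : LE (Kn n.+1) = (2 * n)%:R.
Proof.
rewrite (perm_LE (lap_spectrum_Kn n)) avg_deg_Kn big_cons big_map big_nseq iter_addr.
rewrite addr0 sub0r normrN normr_nat -natr1 addrAC subrr add0r normr1.
by rewrite -mulr_natl mulr1 -natrD; congr _%:R; lia.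
Qed.

Definition G_class i r (v : vtype (G_ir i r)) : 'I_4 :=
  match v with
  | inl _ => @Ordinal 4 0 isT
  | inr (inl _) => @Ordinal 4 1 isT
  | inr (inr (inl _)) => @Ordinal 4 2 isT
  | inr (inr (inr _)) => @Ordinal 4 3 isT
  end.

Definition G_class_size i r : seq nat := [:: 2 * r + 1; 2 * r + 1 - i; 1; i + 1]%N.
Definition G_class_deg i r : seq nat :=
  [:: 2 * r + 3; 2 * r + 1; 2 * r + 2 + i; 2 * r + 2]%N.

Lemma deg_G_ir i r (v : vtype (G_ir i r)) :
  (i <= 2 * r + 1)%N -> deg v = nth 0 (G_class_deg i r) (G_class v).
Proof.
move=> le_i_2r1; rewrite /deg -sum1_card big_mkcond /= !big_sumType /=.
by case: v => [a|[b|[c|d]]] /=; rewrite ?big_const_ord /= !iter_addn_0; lia.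
Qed.
Definition G_class_adj (a b : 'I_4) : bool :=
  match val a, val b with
  | 0, 0 => false | 0, _ | _, 0 => true
  | 2, 3 | 3, 2 => true
  | _, _ => false
  end.

Definition G_class_adj_mx (R : nzRingType) : 'M[R]_4 :=
  \matrix_(a, b) (G_class_adj a b)%:R.

Lemma det_1D_G_class_adj (R : comNzRingType) (q0 q1 q2 q3 : R) :
  \det (1%:M + G_class_adj_mx R *m diag_mx (\row_a [:: q0; q1; q2; q3]`_a)) =
  (1 - q0 * q1) * (1 - q2 * q3) - q0 * q2 - q0 * q3 + 2 * q0 * q2 * q3.
Proof.
set q := [:: q0; q1; q2; q3].
have -> : 1%:M + G_class_adj_mx R *m diag_mx (\row_a q`_a) =
          \matrix_(a, b) ((a == b)%:R + (G_class_adj a b)%:R * q`_b).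
  by apply/matrixP => a b; rewrite mul_mx_diag !mxE.
rewrite (expand_det_row _ ord0) /cofactor !big_ord_recr big_ord0 /= !mxE /=.
rewrite !(expand_det_row _ ord0) /cofactor !big_ord_recr !big_ord0 /= !mxE /=.
rewrite !(expand_det_row _ ord0) /cofactor !big_ord_recr !big_ord0 /= !mxE /=.
rewrite !det_mx11 !mxE /=.
ring.
Qed.

Lemma adj_G_ir i r (u v : vtype (G_ir i r)) :
  adj u v = G_class_adj (G_class u) (G_class v).
Proof. by case: u => [a|[b|[c|d]]]; case: v => [a'|[b'|[c'|d']]]. Qed.

Definition G_ir_spectrum i r : seq nat :=
  [:: 0; 4 * r + 4; 2 * r + 3 + i]%N ++ nseq (2 * r) (2 * r + 3)%N
  ++ nseq (2 * r + 1 - i) (2 * r + 1)%N ++ nseq i (2 * r + 2)%N.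

Lemma lap_spectrum_G_ir i r : (i <= 2 * r)%N ->
  perm_eq (lap_spectrum (G_ir i r)) [seq m%:R | m <- G_ir_spectrum i r].
Proof.
move=> le_i_2r; have le_i_2r1 : (i <= 2 * r + 1)%N by lia.
set d := fun v : vtype (G_ir i r) => (nth 0 (G_class_deg i r) (G_class v))%:R : algC.
apply: (perm_lap_spectrum (M := (4 * r + 5)%N)) => k lt_k.
set x : algC := k%:R.
rewrite (@horner_char_poly_laplacian _ _ (@G_class i r) d (G_class_adj_mx _)); first last.
- move=> v; rewrite eqr_nat; apply/eqP.
  by case: v => [a|[b|[c|e]]] /=; lia.
- by move=> u v; rewrite /d -!deg_G_ir // adj_G_ir mxE.
pose q a := (nth 0 (G_class_size i r) a)%:R / (x - (nth 0 (G_class_deg i r) a)%:R).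
have -> : class_resolvent (@G_class i r) d x =
          diag_mx (\row_a [:: q 0; q 1; q 2; q 3]`_a).
  congr diag_mx; apply/rowP => a; rewrite !mxE big_mkcond !big_sumType /=.
  case: a => [[|[|[|[|a]]]] lt_a4] //=;
    by rewrite /d /= ?big1_eq ?add0r ?addr0 sumr_const card_ord /q mulr_natl.
rewrite det_1D_G_class_adj /d !big_sumType /= !prodr_const !card_ord.
rewrite !big_cons !map_cat !big_cat !big_map !big_nseq !iter_mulr !mulr1 /q /=.
have exprD1 (y : algC) m : y ^+ (m + 1) = y ^+ m * y by rewrite addn1 exprSr.
rewrite !exprD1 expr1 subr0 natrB //.
have x_sub_neq0 m : (m < 4 * r + 5)%N -> x - m%:R != 0.
  by rewrite subr_eq0 eqr_nat; lia.
field; rewrite -!natrM -!natrD !natr1.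
by rewrite !x_sub_neq0 //; lia.
Qed.

Lemma gorder_G_ir i r : (i <= 2 * r + 1)%N -> gorder (G_ir i r) = (4 * r + 4)%N.
Proof. by move=> le_i; rewrite /gorder /= !card_sum !card_ord; lia. Qed.

Lemma sum_deg_G_ir i r : (i <= 2 * r + 1)%N ->
  (\sum_(v : vtype (G_ir i r)) deg v = 8 * r * r + 16 * r + 8 + 2 * i)%N.
Proof.
move=> le_i; rewrite (eq_bigr _ (fun v _ => deg_G_ir v le_i)) !big_sumType /=.
by rewrite !sum_nat_const !card_ord; nia.
Qed.

Lemma avg_deg_G_ir i r : (i <= 2 * r + 1)%N ->
  avg_deg (G_ir i r) = ratr ((8 * r * r + 16 * r + 8 + 2 * i)%:R / (4 * r + 4)%:R).
Proof.
by move=> le_i; rewrite /avg_deg sum_deg_G_ir // gorder_G_ir // fmorph_div !rmorph_nat.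
Qed.

Lemma sum_dist_G_ir_spectrum i r : (i <= 2 * r)%N ->
  \sum_(m <- G_ir_spectrum i r)
     `|m%:R - (8 * r * r + 16 * r + 8 + 2 * i)%:R / (4 * r + 4)%:R : rat|
  = (8 * r + 6)%:R.
Proof.
move=> le_i; have r_ge0 : 0 <= r%:R :> rat by rewrite ler0n.
have i_ge0 : 0 <= i%:R :> rat by rewrite ler0n.
have i_le : i%:R <= 2 * r%:R :> rat by rewrite -natrM ler_nat.
set t : rat := i%:R / (2 * r%:R + 2).
have t_ge0 : 0 <= t by rewrite divr_ge0 //; lra.
have t_le1 : t <= 1 by rewrite ler_pdivrMr; lra.
have -> : (8 * r * r + 16 * r + 8 + 2 * i)%:R / (4 * r + 4)%:R = 2 * r%:R + 2 + t.
  by rewrite /t !natrD !natrM; field; apply/andP; split; apply: lt0r_neq0; lra.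
rewrite /G_ir_spectrum !big_cat /= !big_cons big_nil !big_nseq !iter_addr !addr0.
clearbody t; rewrite !natrD.
rewrite ler0_norm; last by lra.
rewrite ger0_norm; last by lra.
rewrite ger0_norm; last by lra.
rewrite ger0_norm; last by lra.
rewrite ler0_norm; last by lra.
rewrite ler0_norm; last by lra.
rewrite mulrnBr; last by lia.
ring.
Qed.

Lemma LE_G_ir i r : (i <= 2 * r)%N -> LE (G_ir i r) = (8 * r + 6)%:R.
Proof.
move=> le_i; rewrite (perm_LE (lap_spectrum_G_ir le_i)) avg_deg_G_ir; last by lia.
set a := (_ / _ : rat); rewrite big_map.
have ratr_dist m : `|m%:R - ratr a| = ratr `|m%:R - a| :> algC.
  by rewrite ratr_norm rmorphB rmorph_nat.
under eq_bigr => m _ do rewrite ratr_dist.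
by rewrite -rmorph_sum sum_dist_G_ir_spectrum // rmorph_nat.
Qed.

Lemma perm_nat_spectra (G H : graph) (s t : seq nat) :
  perm_eq (lap_spectrum G) [seq m%:R | m <- s] ->
  perm_eq (lap_spectrum H) [seq m%:R | m <- t] ->
  perm_eq (lap_spectrum G) (lap_spectrum H) -> perm_eq s t.
Proof.
move=> Gs Ht GH; apply: (@perm_map_inj _ _ (fun m => m%:R : algC)).
  by move=> m n /eqP; rewrite eqr_nat => /eqP.
by apply: perm_trans (perm_trans _ GH) Ht; rewrite perm_sym.
Qed.

Lemma count_G_ir_spectrum i r : (i <= 2 * r)%N ->
  count_mem (2 * r + 1)%N (G_ir_spectrum i r) = (2 * r + 1 - i)%N.
Proof.
move=> le_i; rewrite /G_ir_spectrum !count_cat /= !count_nseq /=.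
by repeat case: eqP => ? /=; lia.
Qed.

Theorem theorem6 (r : nat) (hr : (1 <= r)%N) :
  (forall i : nat, (i <= 2 * r)%N ->
     gorder (G_ir i r) = (4 * r + 4)%N /\
     LE (G_ir i r) = LE (Kn (4 * r + 4)) /\
     LE (Kn (4 * r + 4)) = (8 * r + 6)%:R /\
     L_borderenergetic (G_ir i r)) /\
  (forall i j : nat, (i <= 2 * r)%N -> (j <= 2 * r)%N -> i <> j ->
     ~ perm_eq (lap_spectrum (G_ir i r)) (lap_spectrum (G_ir j r))) /\
  (forall i : nat, (i <= 2 * r)%N ->
     ~ perm_eq (lap_spectrum (G_ir i r)) (lap_spectrum (Kn (4 * r + 4)))).
Proof.
have order_eq : (4 * r + 4 = (4 * r + 3).+1)%N by lia.
have LE_K : LE (Kn (4 * r + 4)) = (8 * r + 6)%:R.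
  by rewrite order_eq LE_Kn; congr _%:R; lia.
split; [|split].
- move=> i le_i.
  have order_G : gorder (G_ir i r) = (4 * r + 4)%N by apply: gorder_G_ir; lia.
  by rewrite /L_borderenergetic order_G LE_G_ir // LE_K.
- move=> i j le_i le_j i_neq_j GH.
  have := permP (perm_nat_spectra (lap_spectrum_G_ir le_i) (lap_spectrum_G_ir le_j) GH).
  by move=> /(_ (pred1 (2 * r + 1)%N)); rewrite !count_G_ir_spectrum //; lia.
- move=> i le_i; rewrite order_eq => GK.
  have := permP (perm_nat_spectra (lap_spectrum_G_ir le_i) (lap_spectrum_Kn _) GK).
  move=> /(_ (pred1 (2 * r + 1)%N)); rewrite count_G_ir_spectrum //= count_nseq /=.
  by repeat case: eqP => ? /=; lia.
Qed.
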